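(* Let $E$ be a graph, $K$ a field, $c=e_1e_2\cdots e_m$ an exclusive cycle in $E$, and $\mu=c^\infty$. Let $f(x)=1+a_1x+\dots+a_nx^n$ ($n\ge 1$, $a_i\in K$) be an irreducible polynomial in $K[x,x^{-1}]$ and $K'=K[x,x^{-1}]/(f(x))$. Let $V_{[\mu]}^f$ be the Ara–Rangaswamy simple left $L_K(E)$-module described in the context. Then $\mathrm{End}_{L_K(E)}(V_{[\mu]}^f)\cong K'$.
   Context: A graph $E=(E^0,E^1,r,s)$ consists of a vertex set $E^0$, an edge set $E^1$ and range/source maps $r,s:E^1\to E^0$. For a field $F$, the Leavitt path algebra $L_F(E)$ is the free associative $F$-algebra generated by $E^0\cup E^1\cup\{e^*:e\in E^1\}$ subject to: (V) $vv'=\delta_{v,v'}v$ for $v,v'\in E^0$; (E1) $s(e)e=er(e)=e$; (E2) $r(e)e^*=e^*s(e)=e^*$; (CK1) $e^*f=\delta_{e,f}r(e)$ for $e,f\in E^1$; (CK2) $v=\sum_{s(e)=v}ee^*$ for every vertex $v$ emitting a finite nonzero number of edges. A finite path is $e_1\cdots e_n$ with $r(e_i)=s(e_{i+1})$ (vertices are paths of length 0); for a path $\gamma=e_1\cdots e_n$, $\gamma^*=e_n^*\cdots e_1^*$. A cycle is a closed path $e_1\cdots e_n$ ($s(e_1)=r(e_n)$) with $s(e_i)\neq s(e_j)$ for $i\ne j$; it is exclusive if it shares no vertex with any other cycle (other than its own rotations). An infinite path is $e_1e_2\cdots$ with $r(e_i)=s(e_{i+1})$; for $n\ge1$, $\tau_{>n}(e_1e_2\cdots)=e_{n+1}e_{n+2}\cdots$,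 $\tau_{>0}$ is the identity. Two infinite paths $\mu,\eta$ are tail-equivalent if $\tau_{>m}(\mu)=\tau_{>n}(\eta)$ for some $m,n\ge0$; $[\mu]$ is the class of $\mu$. $V_{[\mu]}$ is the vector space with basis $[\mu]$, a left $L_F(E)$-module via: $v\cdot\eta=\eta$ if $v=s(\eta)$, else $0$; $e\cdot\eta=e\eta$ if $r(e)=s(\eta)$, else $0$; $e^*\cdot\eta=\tau_{>1}(\eta)$ if $\eta=e\eta'$, else $0$. Construction of $V_{[\mu]}^f$: let $\bar x$ be the image of $x$ in the field $K'$; let $\sigma$ be the $K'$-algebra automorphism of $L_{K'}(E)$ fixing all vertices and all $e,e^*$ with $e\neq e_1$, and sending $e_1\mapsto \bar x e_1$, $e_1^*\mapsto \bar x^{-1}e_1^*$. The twisted module $V_{[\mu]}^\sigma$ is $V_{[\mu]}$ (over $L_{K'}(E)$) as a vector space with action $a\cdot m=\sigma(a)m$. $V_{[\mu]}^f$ is $V_{[\mu]}^\sigma$ regarded as an $L_K(E)$-module by restriction of scalars along $L_K(E)\subseteq L_{K'}(E)$; it is a simple $L_K(E)$-module. *)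

From HB Require Import structures.
From mathcomp Require Import all_boot all_order ssralg poly polydiv.
From mathcomp Require Import qpoly.
From Stdlib Require List.
Set Implicit Arguments. Unset Strict Implicit. Unset Printing Implicit Defensive.
Import GRing.Theory.
Local Open Scope ring_scope.

Section Graph.
Variables (V Ed : eqType) (s r : Ed -> V).

Definition is_fpath (p : seq Ed) : Prop :=
  match p with [::] => True | e :: p' => path (fun a b => r a == s b) e p' end.

Definition is_cycle (c : seq Ed) : Prop :=
  match c with
  | [::] => False
  | e :: c' => [/\ is_fpath c, s e = r (last e c') & uniq (map s c)]
  end.

Definition cycle_verts (c : seq Ed) : seq V := map s c.

Definition exclusive_cycle (c : seq Ed) : Prop :=
  is_cycle c /\
  forall d, is_cycle d ->
    (exists v, v \in cycle_verts d /\ v \in cycle_verts c) ->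
    exists k, d = rot k c.

Definition is_ipath (eta : nat -> Ed) : Prop := forall i, r (eta i) = s (eta i.+1).

Definition tail_equiv (mu eta : nat -> Ed) : Prop :=
  exists m n : nat, forall k : nat, mu (m + k)%N = eta (n + k)%N.

Definition cyc_inf (e1 : Ed) (c' : seq Ed) : nat -> Ed :=
  fun i => nth e1 (e1 :: c') (i %% size (e1 :: c')).

Section Class.
Variable mu : nat -> Ed.

Definition Cls : Type := {eta : nat -> Ed | is_ipath eta /\ tail_equiv eta mu}.

Lemma ctail_proof (eta : Cls) :
  is_ipath (fun i => sval eta i.+1) /\ tail_equiv (fun i => sval eta i.+1) mu.
Proof.
case: eta => eta [Hp [m [n Hmn]]] /=; split; first by move=> i; exact: Hp.
exists m, n.+1 => k /=. rewrite addSn -!addnS; exact: Hmn.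
Qed.

Definition ctail (eta : Cls) : Cls := exist _ _ (ctail_proof eta).

Lemma ccons_proof (e : Ed) (eta : Cls) (h : r e = s (sval eta 0)) :
  is_ipath (fun i => if i is j.+1 then sval eta j else e) /\
  tail_equiv (fun i => if i is j.+1 then sval eta j else e) mu.
Proof.
case: eta h => eta [Hp [m [n Hmn]]] /= h; split.
  by case=> [|i] //=; exact: Hp.
by exists m.+1, n => k; rewrite addSn Hmn.
Qed.

Definition ccons (e : Ed) (eta : Cls) (h : r e = s (sval eta 0)) : Cls :=
  exist _ _ (ccons_proof h).
End Class.

Section Module.
Variables (K : fieldType) (f : {poly K}) (e1 : Ed) (c' : seq Ed).

(* K' = K[x]/(f) (= K[x,x^-1]/(f) since f(0) = 1), via the monic associate of f *)
Definition Kp := {poly %/ ((lead_coef f)^-1 *: f)}.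
Definition xbar : Kp := qpolyX ((lead_coef f)^-1 *: f).

Definition mu := cyc_inf e1 c'.
Definition Fun := Cls mu -> Kp.

(* finite support: elements of V_[mu] (K'-span of the basis [mu]) *)
Definition fin_supp (F : Fun) : Prop :=
  exists l : seq (Cls mu), forall eta, F eta != 0 -> List.In eta l.

Definition VMod : Type := {F : Fun | fin_supp F}.

(* action of the generators on V_[mu]^sigma, sigma(e1) = xbar e1, sigma(e1^* ) = xbar^-1 e1^* *)
Definition wE (e : Ed) : Kp := if e == e1 then xbar else 1.
Definition wG (e : Ed) : Kp := if e == e1 then xbar^-1 else 1.

Definition actK (k : K) (F : Fun) : Fun := fun eta => k%:A * F eta.
Definition actAdd (F G : Fun) : Fun := fun eta => F eta + G eta.
Definition actV (v : V) (F : Fun) : Fun :=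
  fun eta => if s (sval eta 0) == v then F eta else 0.
Definition actE (e : Ed) (F : Fun) : Fun :=
  fun eta => if sval eta 0 == e then wE e * F (ctail eta) else 0.
Definition actG (e : Ed) (F : Fun) : Fun :=
  fun eta => match r e =P s (sval eta 0) with
             | ReflectT h => wG e * F (ccons h)
             | ReflectF _ => 0
             end.

(* phi commutes with a (partial) operation on V_[mu]; the operations preserve
   finite support, so this is ordinary commutation *)
Definition commutes (op : Fun -> Fun) (phi : VMod -> VMod) : Prop :=
  forall m m' : VMod, sval m' = op (sval m) -> sval (phi m') = op (sval (phi m)).

Definition is_endo (phi : VMod -> VMod) : Prop :=
  [/\ (forall m1 m2 m3 : VMod, sval m3 = actAdd (sval m1) (sval m2) ->
          sval (phi m3) = actAdd (sval (phi m1)) (sval (phi m2))),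
      (forall k, commutes (actK k) phi),
      (forall v, commutes (actV v) phi),
      (forall e, commutes (actE e) phi) &
      (forall e, commutes (actG e) phi)].

Definition End_ring_iso (Phi : Kp -> VMod -> VMod) : Prop :=
  (forall a, is_endo (Phi a)) /\
  (forall a b m, sval (Phi (a + b) m) = actAdd (sval (Phi a m)) (sval (Phi b m))) /\
  (forall a b m, Phi (a * b) m = Phi a (Phi b m)) /\
  (forall m, Phi 1 m = m) /\
  (forall a b, (forall m, Phi a m = Phi b m) -> a = b) /\
  (forall phi, is_endo phi -> exists a, forall m, phi m = Phi a m).
End Module.
End Graph.

(* An endomorphism phi of V_[mu]^f is multiplication by a := phi(mu)(mu).
   For every prefix p of mu we have mu = p p^* mu, so phi(mu) = p p^* phi(mu) is
   supported on paths beginning with p, i.e. phi(mu) = a mu.  In the twisted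
   action the cycle c acts on K' mu as multiplication by x, which is a unit since
   f(0) = 1, and K' is generated by x over K; hence phi(b mu) = b a mu.  Every
   path z tail-equivalent to mu is P Q^* mu up to a unit of K', so phi(b z) = b a z,
   and phi = a by finite support. *)

From Pilot Require Import Defs.
From HB Require Import structures.
From mathcomp Require Import all_boot all_order ssralg poly polydiv qpoly.
From Stdlib Require Import FunctionalExtensionality ProofIrrelevance ClassicalEpsilon.
From Stdlib Require List.
Set Implicit Arguments. Unset Strict Implicit. Unset Printing Implicit Defensive.
Import GRing.Theory.
Local Open Scope ring_scope.

Lemma sig_fun_ext (A B : Type) (P : (A -> B) -> Prop) (x y : {g : A -> B | P g}) :
  sval x =1 sval y -> x = y.
Proof.
case: x y => [g Pg] [g' Pg'] /= /functional_extensionality eqg.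
by subst g'; rewrite (proof_irrelevance _ Pg Pg').
Qed.

Section QuotientPoly.
Variables (K : fieldType) (h : {poly K}).

Lemma qpolyX_unit : h \is monic -> (1 < size h)%N -> ~~ root h 0 ->
  qpolyX h \is a GRing.unit.
Proof.
move=> monic_h size_h h0.
have mk_h : mk_monic h = h by rewrite /mk_monic size_h monic_h.
have cop : coprimep (mk_monic h) (qpolyX h).
  rewrite /qpolyX /in_qpoly /= mk_h -Pdiv.IdomainMonic.modpE // coprimep_modr.
  by rewrite -[X in coprimep _ X]subr0 -polyC0 coprimep_XsubC.
by apply/unitrPr; exists (qpoly_inv (qpolyX h)); exact: qpoly_mulzV.
Qed.

Lemma qpoly_horner_ind (P : {poly %/ h} -> Prop) :
  P 0 -> (forall b c, P b -> P (qpolyX h * b + c%:A)) -> forall b, P b.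
Proof.
move=> P0 PS b; have -> : b = in_qpoly h (val b).
  by apply/val_inj/esym; exact: in_qpoly_small (size_mk_monic b).
elim/poly_ind: (val b) => [|q c]; first by rewrite in_qpoly0.
by move=> /(PS _ c); rewrite in_qpolyD in_qpolyM -alg_polyC in_qpolyZ in_qpoly1 mulrC.
Qed.

End QuotientPoly.

Lemma xbar_unit (K : fieldType) (f : {poly K}) :
  (1 < size f)%N -> f`_0 = 1 -> xbar f \is a GRing.unit.
Proof.
move=> size_f f0; have f_neq0 : f != 0 by rewrite -size_poly_gt0 (ltn_trans _ size_f).
have lf_neq0 : lead_coef f != 0 by rewrite lead_coef_eq0.
apply: qpolyX_unit; first by rewrite monicE lead_coefZ mulVf.
  by rewrite size_scale ?invr_eq0.
by rewrite /root horner_coef0 coefZ f0 mulr1 invr_eq0.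
Qed.

Section PathClass.
Variables (V Ed : eqType) (s r : Ed -> V) (mu : nat -> Ed).
Local Notation Cl := (Cls s r mu).

Lemma cls_ext (x y : Cl) : (forall i, sval x i = sval y i) -> x = y.
Proof. exact: sig_fun_ext. Qed.

Lemma cls_ipath (x : Cl) i : r (sval x i) = s (sval x i.+1).
Proof. exact: (proj1 (proj2_sig x)). Qed.

Lemma ccons_ctail (x : Cl) (h : r (sval x 0) = s (sval (ctail x) 0)) :
  ccons h = x.
Proof. by apply: cls_ext => -[]. Qed.

Lemma ctail_ccons e (x : Cl) (h : r e = s (sval x 0)) : ctail (ccons h) = x.
Proof. exact: cls_ext. Qed.

Fixpoint path_prefix (N : nat) (x : Cl) : seq Ed :=
  if N is N'.+1 then sval x 0 :: path_prefix N' (ctail x) else [::].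

Lemma size_path_prefix N x : size (path_prefix N x) = N.
Proof. by elim: N x => [|N IH] x //=; rewrite IH. Qed.

Lemma nth_path_prefix e0 N x i :
  (i < N)%N -> nth e0 (path_prefix N x) i = sval x i.
Proof. by elim: N x i => [|N IH] x [|i] //= /IH ->. Qed.

Fixpoint path_drop (N : nat) (x : Cl) : Cl :=
  if N is N'.+1 then path_drop N' (ctail x) else x.

Lemma val_path_drop N x i : sval (path_drop N x) i = sval x (N + i).
Proof. by elim: N x => [|N IH] x //=; rewrite IH addSnnS. Qed.

End PathClass.

Section ModuleCalculus.
Variables (V Ed : eqType) (s r : Ed -> V) (K : fieldType) (f : {poly K}).
Variables (e1 : Ed) (c' : seq Ed).
Local Notation Cl := (Cls s r (mu e1 c')).
Local Notation Fn := (Fun s r f e1 c').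
Local Notation VM := (VMod s r f e1 c').
Local Notation wE := (wE f e1).

Lemma vmod_ext (m m' : VM) : (forall x, sval m x = sval m' x) -> m = m'.
Proof. exact: sig_fun_ext. Qed.

Definition dirac (z : Cl) (b : Kp f) : Fn :=
  fun x => if excluded_middle_informative (x = z) then b else 0.

Lemma dirac_id z b : dirac z b z = b.
Proof. by rewrite /dirac; case: excluded_middle_informative. Qed.

Lemma dirac_neq z b x : x <> z -> dirac z b x = 0.
Proof. by rewrite /dirac; case: excluded_middle_informative. Qed.

Lemma fin_supp_dirac z b : fin_supp (dirac z b).
Proof.
exists [:: z] => x; rewrite /dirac.
by case: (excluded_middle_informative (x = z)) => [xz|_] /=; [left | rewrite eqxx].
Qed.

Lemma fin_supp_actAdd (F G : Fn) : fin_supp F -> fin_supp G -> fin_supp (actAdd F G).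
Proof.
move=> [l1 supp1] [l2 supp2]; exists (l1 ++ l2) => x Hx; apply: List.in_or_app.
have [F0|/supp1] := eqVneq (F x) 0; last by left.
have [G0|/supp2] := eqVneq (G x) 0; last by right.
by move: Hx; rewrite /actAdd F0 G0 addr0 eqxx.
Qed.

Lemma fin_supp_scale (a : Kp f) (F : Fn) : fin_supp F -> fin_supp (fun x => a * F x).
Proof.
move=> [l supp]; exists l => x Hx; apply: supp.
by apply: contra_neq Hx => ->; rewrite mulr0.
Qed.

Lemma fin_supp_actK k (F : Fn) : fin_supp F -> fin_supp (actK k F).
Proof. exact: fin_supp_scale. Qed.

Lemma fin_supp_actE e (F : Fn) : fin_supp F -> fin_supp (actE e F).
Proof.
move=> [l supp].
pose cons_e (z : Cl) : Cl :=
  if r e =P s (sval z 0) is ReflectT h then ccons h else z.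
exists (map cons_e l) => x; rewrite /actE; case: (sval x 0 =P e) => [x0|]; last first.
  by rewrite eqxx.
move=> Hx; apply/List.in_map_iff; exists (ctail x); split; last first.
  by apply: supp; apply: contra_neq Hx => ->; rewrite mulr0.
rewrite /cons_e; case: (r e =P _) => [h|]; last by rewrite -x0 cls_ipath.
by apply: cls_ext => -[|i] //=.
Qed.

Lemma fin_supp_actG e (F : Fn) : fin_supp F -> fin_supp (actG e F).
Proof.
move=> [l supp]; exists (map (@ctail _ _ s r _) l) => x.
rewrite /actG; case: (r e =P _) => [h Hx|]; last by rewrite eqxx.
apply/List.in_map_iff; exists (ccons h); split; first exact: cls_ext.
by apply: supp; apply: contra_neq Hx => ->; rewrite mulr0.
Qed.

Definition vmod_dirac z b : VM := exist _ _ (fin_supp_dirac z b).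
Definition vmod_add (m m' : VM) : VM :=
  exist _ _ (fin_supp_actAdd (proj2_sig m) (proj2_sig m')).
Definition vmod_scale (a : Kp f) (m : VM) : VM :=
  exist _ _ (fin_supp_scale a (proj2_sig m)).
Definition vmod_actK k (m : VM) : VM := exist _ _ (fin_supp_actK k (proj2_sig m)).
Definition vmod_actE e (m : VM) : VM := exist _ _ (fin_supp_actE e (proj2_sig m)).
Definition vmod_actG e (m : VM) : VM := exist _ _ (fin_supp_actG e (proj2_sig m)).

Definition actP (p : seq Ed) (F : Fn) : Fn := foldr (@actE _ _ s r _ f e1 c') F p.
Definition actPs (p : seq Ed) (F : Fn) : Fn := foldl (fun G e => actG e G) F p.
Definition vmod_actP (p : seq Ed) (m : VM) : VM := foldr vmod_actE m p.
Definition vmod_actPs (p : seq Ed) (m : VM) : VM := foldl (fun m e => vmod_actG e m) m p.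

Lemma val_vmod_actP p m : sval (vmod_actP p m) = actP p (sval m).
Proof. by elim: p => //= e p ->. Qed.

Lemma val_vmod_actPs p m : sval (vmod_actPs p m) = actPs p (sval m).
Proof. by elim: p m => //= e p IH m; rewrite IH. Qed.

Definition weightP (p : seq Ed) : Kp f := \prod_(e <- p) wE e.

Lemma wG_wE e : wG f e1 e = (wE e)^-1.
Proof. by rewrite /wG /wE; case: ifP; rewrite ?invr1. Qed.

Lemma actE_dirac z b :
  actE (sval z 0) (dirac (ctail z) b) = dirac z (wE (sval z 0) * b).
Proof.
apply: functional_extensionality => x; rewrite /actE.
case: (sval x 0 =P sval z 0) => [x0|x0]; last first.
  by rewrite dirac_neq // => xz; case: x0; rewrite xz.
case: (excluded_middle_informative (x = z)) => [->|xz]; first by rewrite !dirac_id.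
rewrite (dirac_neq _ xz) dirac_neq ?mulr0 // => x'z'; apply: xz.
by apply: cls_ext => -[|i] //; exact: (congr1 (fun y : Cl => sval y i) x'z').
Qed.

Lemma actG_dirac z b :
  actG (sval z 0) (dirac z b) = dirac (ctail z) ((wE (sval z 0))^-1 * b).
Proof.
apply: functional_extensionality => x; rewrite /actG -wG_wE.
case: (r (sval z 0) =P s (sval x 0)) => [h|Nh]; last first.
  by rewrite dirac_neq // => xz; apply: Nh; rewrite xz; exact: cls_ipath.
case: (excluded_middle_informative (x = ctail z)) => [xz|xz].
  by subst x; rewrite dirac_id ccons_ctail dirac_id.
by rewrite !dirac_neq ?mulr0 // => hz; apply: xz; rewrite -hz ctail_ccons.
Qed.

Lemma actP_dirac N z b :
  actP (path_prefix N z) (dirac (path_drop N z) b) =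
  dirac z (weightP (path_prefix N z) * b).
Proof.
elim: N z b => [|N IH] z b /=; first by rewrite /weightP big_nil mul1r.
by rewrite IH actE_dirac /weightP big_cons mulrA.
Qed.

Lemma actP_supp p F x : actP p F x != 0 -> path_prefix (size p) x = p.
Proof.
elim: p x => [|e p IH] x //=; rewrite /actE.
case: (sval x 0 =P e) => [->|]; last by rewrite eqxx.
by move=> Hx; rewrite IH //; apply: contra_neq Hx => ->; rewrite mulr0.
Qed.

Section UnitGenerator.
Hypothesis xbar_is_unit : xbar f \is a GRing.unit.

Lemma wE_unit e : wE e \is a GRing.unit.
Proof. by rewrite /Defs.wE; case: ifP => _; rewrite ?unitr1. Qed.

Lemma weightP_unit p : weightP p \is a GRing.unit.
Proof. by apply: unitr_prod => e _; exact: wE_unit. Qed.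

Lemma actPs_dirac N z b :
  actPs (path_prefix N z) (dirac z b) =
  dirac (path_drop N z) ((weightP (path_prefix N z))^-1 * b).
Proof.
elim: N z b => [|N IH] z b /=; first by rewrite /weightP big_nil invr1 mul1r.
rewrite actG_dirac IH /weightP big_cons invrM ?wE_unit ?weightP_unit //.
by rewrite mulrA.
Qed.

End UnitGenerator.
End ModuleCalculus.

Section CyclePath.
Variables (V Ed : eqType) (s r : Ed -> V) (e1 : Ed) (c' : seq Ed).
Hypothesis cycle_c : is_cycle s r (e1 :: c').
Local Notation c := (e1 :: c').

Lemma mu_ipath : is_ipath s r (mu e1 c').
Proof.
case: cycle_c => path_c last_c _ i; rewrite /mu /cyc_inf.
have -> : (i.+1 %% size c = (i %% size c).+1 %% size c)%N.
  by rewrite -addn1 -modnDml addn1.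
have : (i %% size c <= size c')%N by rewrite -ltnS ltn_mod.
rewrite leq_eqVlt => /orP [/eqP ->|lt_ic].
  by rewrite modnn nth_last last_c.
rewrite (@modn_small (i %% size c).+1) ?ltnS //.
by move/pathP: path_c => /(_ e1 _ lt_ic) /eqP.
Qed.

Definition mu_cls : Cls s r (mu e1 c') :=
  exist _ (mu e1 c') (conj mu_ipath (ex_intro _ 0%N (ex_intro _ 0%N (fun=> erefl)))).

Lemma path_prefix_mu : path_prefix (size c) mu_cls = c.
Proof.
apply: (@eq_from_nth _ e1); first by rewrite size_path_prefix.
move=> i; rewrite size_path_prefix => lt_ic.
by rewrite nth_path_prefix //= /mu /cyc_inf modn_small.
Qed.

Lemma path_drop_mu : path_drop (size c) mu_cls = mu_cls.
Proof. by apply: cls_ext => i; rewrite val_path_drop /= /mu /cyc_inf modnDl. Qed.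

Lemma weightP_cycle (K : fieldType) (f : {poly K}) : weightP f e1 c = xbar f.
Proof.
rewrite /weightP big_cons /wE eqxx big1_seq ?mulr1 // => e /andP [_ c'e].
case: cycle_c => _ _ /= /andP [s_e1 _].
by rewrite ifN //; apply: contraNneq s_e1 => <-; rewrite map_f.
Qed.

Lemma actP_cycle_dirac (K : fieldType) (f : {poly K}) b :
  actP c (dirac mu_cls b) = dirac mu_cls (xbar f * b) :> Fun s r f e1 c'.
Proof.
have := actP_dirac (size c) mu_cls b.
by rewrite path_prefix_mu path_drop_mu weightP_cycle.
Qed.

End CyclePath.

Section Endomorphism.
Variables (V Ed : eqType) (s r : Ed -> V) (K : fieldType) (f : {poly K}).
Variables (e1 : Ed) (c' : seq Ed).
Hypothesis cycle_c : is_cycle s r (e1 :: c').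
Hypothesis xbar_is_unit : xbar f \is a GRing.unit.
Local Notation c := (e1 :: c').
Local Notation Cl := (Cls s r (mu e1 c')).
Local Notation VM := (VMod s r f e1 c').
Local Notation mu_cls := (mu_cls cycle_c).

Variable phi : VM -> VM.
Hypothesis endo_phi : is_endo phi.

Lemma endo_add m m' : sval (phi (vmod_add m m')) = actAdd (sval (phi m)) (sval (phi m')).
Proof. by case: endo_phi => add_phi _ _ _ _; exact: add_phi. Qed.

Lemma endo_actK k m : sval (phi (vmod_actK k m)) = actK k (sval (phi m)).
Proof. by case: endo_phi => _ K_phi _ _ _; exact: K_phi. Qed.

Lemma endo_actP p m : sval (phi (vmod_actP p m)) = actP p (sval (phi m)).
Proof. by case: endo_phi => _ _ _ E_phi _; elim: p => //= e p <-; exact: E_phi. Qed.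

Lemma endo_actPs p m : sval (phi (vmod_actPs p m)) = actPs p (sval (phi m)).
Proof.
case: endo_phi => _ _ _ _ G_phi; elim: p m => //= e p IH m.
by rewrite IH (G_phi e m).
Qed.

Lemma endo_zero m : (forall x, sval m x = 0) -> forall x, sval (phi m) x = 0.
Proof.
move=> m0 x; have m_mm : m = vmod_add m m.
  by apply: vmod_ext => y; rewrite /= /actAdd m0 addr0.
have := congr1 (fun F => F x - sval (phi m) x) (endo_add m m).
by rewrite -m_mm /actAdd subrr addrK.
Qed.

Let mu_vec : VM := vmod_dirac mu_cls 1.
Let a := sval (phi mu_vec) mu_cls.

Lemma endo_dirac_mu_supp x : sval (phi mu_vec) x != 0 -> x = mu_cls.
Proof.
move=> phi_x; apply: cls_ext => i; set p := path_prefix i.+1 mu_cls.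
have mu_pps : mu_vec = vmod_actP p (vmod_actPs p mu_vec).
  apply: vmod_ext => y; rewrite val_vmod_actP val_vmod_actPs actPs_dirac //.
  by rewrite actP_dirac mulr1 divrr ?weightP_unit.
move: phi_x; rewrite mu_pps endo_actP => /actP_supp; rewrite size_path_prefix => px.
by rewrite -(@nth_path_prefix _ _ _ _ _ e1 i.+1 x i) // px nth_path_prefix.
Qed.

Lemma endo_dirac_mu : sval (phi mu_vec) = dirac mu_cls a.
Proof.
apply: functional_extensionality => x.
case: (excluded_middle_informative (x = mu_cls)) => [->|x_mu]; first by rewrite dirac_id.
rewrite dirac_neq //.
by have [//|/endo_dirac_mu_supp] := eqVneq (sval (phi mu_vec) x) 0.
Qed.

Lemma endo_dirac_mu_scale b : sval (phi (vmod_dirac mu_cls b)) = dirac mu_cls (b * a).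
Proof.
elim/(qpoly_horner_ind (h := (lead_coef f)^-1 *: f)): b => [|b k IH].
  apply: functional_extensionality => x; rewrite mul0r.
  rewrite endo_zero => [|y]; rewrite /= /dirac; by case: excluded_middle_informative.
have decomp : vmod_dirac mu_cls (xbar f * b + k%:A) =
              vmod_add (vmod_actP c (vmod_dirac mu_cls b)) (vmod_actK k mu_vec).
  apply: vmod_ext => x.
  rewrite -[RHS]/(actAdd (sval (vmod_actP c (vmod_dirac mu_cls b)))
                         (actK k (sval mu_vec)) x).
  rewrite val_vmod_actP actP_cycle_dirac /actAdd /actK /= /dirac.
  by case: (excluded_middle_informative (x = mu_cls)) => ? /=; rewrite ?mulr0 ?addr0 ?mulr1.
rewrite decomp endo_add endo_actP IH actP_cycle_dirac endo_actK endo_dirac_mu.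
apply: functional_extensionality => x; rewrite /actAdd /actK /dirac.
case: (excluded_middle_informative (x = mu_cls)) => ? /=; rewrite ?mulr0 ?addr0 //.
by rewrite mulrDl mulrA.
Qed.

Lemma endo_dirac z b : sval (phi (vmod_dirac z b)) = dirac z (b * a).
Proof.
have [M [N tail_zmu]] := proj2 (proj2_sig z).
have drop_zmu : path_drop N mu_cls = path_drop M z.
  by apply: cls_ext => i; rewrite !val_path_drop tail_zmu.
set P := path_prefix M z; set Q := path_prefix N mu_cls.
set b' := weightP f e1 Q / weightP f e1 P * b.
have PQs : forall b'', actP P (actPs Q (dirac mu_cls b'')) =
                       dirac z (weightP f e1 P * ((weightP f e1 Q)^-1 * b'')).
  by move=> b''; rewrite actPs_dirac // drop_zmu actP_dirac.
have wPQ : weightP f e1 P * ((weightP f e1 Q)^-1 * b') = b.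
  by rewrite /b' -mulrA mulKr ?weightP_unit // mulVKr ?weightP_unit.
have z_PQs : vmod_dirac z b = vmod_actP P (vmod_actPs Q (vmod_dirac mu_cls b')).
  by apply: vmod_ext => x; rewrite val_vmod_actP val_vmod_actPs PQs wPQ.
rewrite z_PQs endo_actP endo_actPs endo_dirac_mu_scale PQs.
by rewrite [_^-1 * _]mulrA [_ * (_ * a)]mulrA wPQ.
Qed.

Lemma endo_supp_scale (l : seq Cl) m : (forall x, sval m x != 0 -> List.In x l) ->
  sval (phi m) = fun x => a * sval m x.
Proof.
elim: l m => [|z l IH] m supp_m.
  have m0 x : sval m x = 0 by have [//|/supp_m] := eqVneq (sval m x) 0.
  by apply: functional_extensionality => x; rewrite endo_zero // m0 mulr0.
pose F x := if excluded_middle_informative (x = z) then 0 else sval m x.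
have supp_F x : F x != 0 -> List.In x l.
  rewrite /F; case: (excluded_middle_informative (x = z)) => [?|xz] /=.
    by rewrite eqxx.
  by case/supp_m => // zx; case: xz.
pose m' : VM := exist _ F (ex_intro _ l supp_F).
have m_split : m = vmod_add m' (vmod_dirac z (sval m z)).
  apply: vmod_ext => x; rewrite /= /actAdd /F /dirac.
  by case: (excluded_middle_informative (x = z)) => [xz|?] /=; rewrite ?add0r ?addr0 ?xz.
rewrite {1}m_split endo_add (IH m' supp_F) endo_dirac.
apply: functional_extensionality => x; rewrite /actAdd /= /F /dirac.
case: (excluded_middle_informative (x = z)) => [xz|?] /=; last by rewrite addr0.
by rewrite mulr0 add0r mulrC xz.
Qed.

Lemma endo_scale m : phi m = vmod_scale a m.
Proof.
have [l supp_m] := proj2_sig m.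
by apply: vmod_ext => x; rewrite (endo_supp_scale supp_m).
Qed.

End Endomorphism.

Section ScalarEndomorphisms.
Variables (V Ed : eqType) (s r : Ed -> V) (K : fieldType) (f : {poly K}).
Variables (e1 : Ed) (c' : seq Ed).
Local Notation VM := (VMod s r f e1 c').

Lemma vmod_scale_endo (a : Kp f) : is_endo (@vmod_scale _ _ s r _ f e1 c' a).
Proof.
split=> [m1 m2 m3|k m m'|v m m'|e m m'|e m m'] /= ->;
  apply: functional_extensionality => x.
- by rewrite /actAdd mulrDr.
- by rewrite /actK mulrCA.
- by rewrite /actV; case: ifP; rewrite ?mulr0.
- by rewrite /actE; case: ifP => _; rewrite ?mulr0 // mulrCA.
- by rewrite /actG; case: (r e =P _) => h; rewrite ?mulr0 // mulrCA.
Qed.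

Lemma vmod_scale_End_ring_iso (cycle_c : is_cycle s r (e1 :: c')) :
  xbar f \is a GRing.unit ->
  End_ring_iso (s := s) (r := r) (f := f) (e1 := e1) (c' := c')
    (@vmod_scale _ _ s r _ f e1 c').
Proof.
move=> xbar_is_unit; split; [exact: vmod_scale_endo|split; [|split; [|split; [|split]]]].
- by move=> a b m; apply: functional_extensionality => x; rewrite /= /actAdd mulrDl.
- by move=> a b m; apply: vmod_ext => x /=; rewrite mulrA.
- by move=> m; apply: vmod_ext => x /=; rewrite mul1r.
- move=> a b eq_ab; set z := mu_cls cycle_c.
  have := congr1 (fun m : VM => sval m z) (eq_ab (vmod_dirac z 1)).
  by rewrite /= dirac_id !mulr1.
- by move=> phi endo_phi; eexists; exact: endo_scale.
Qed.

End ScalarEndomorphisms.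

Theorem lemma2p2 (V Ed : eqType) (s r : Ed -> V) (K : fieldType)
    (e1 : Ed) (c' : seq Ed) (f : {poly K}) :
  exclusive_cycle s r (e1 :: c') ->
  (1 < size f)%N -> f`_0 = 1 -> irreducible_poly f ->
  exists Phi : Kp f -> VMod s r f e1 c' -> VMod s r f e1 c',
    End_ring_iso (s := s) (r := r) (f := f) (e1 := e1) (c' := c') Phi.
Proof.
move=> [cycle_c _] size_f f0 _; exists (@vmod_scale _ _ s r _ f e1 c').
exact/vmod_scale_End_ring_iso/xbar_unit.
Qed.
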